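(* Let $B\subset\mathbb R^8$ be a bounded domain and let $(B^h)_{h>0}$, $B^h\subset\mathbb Z^8_h$, converge to $B$. Let $f\in C^1(B,\mathbb O)$ and suppose there are functions $f^h:B^h\to\mathbb O$ with $D^hf^h(x)=0$ for every $x\in(B^h)^\circ$ and $$\lim_{h\to0^+}\ \max_{x\in B^h\cap B}|f(x)-f^h(x)|=0.$$ Then $Df=0$ on $B$.
   Context: $\mathbb O$ is the real octonion algebra with basis $\mathbf e_0=1,\dots,\mathbf e_7$, identified with $\mathbb R^8$; $|\cdot|$ is the Euclidean norm. $Df=\sum_{l=0}^7\mathbf e_l\,\partial f/\partial x_l$. For $h>0$, $\mathbb Z^8_h=(h\mathbb Z)^8$, $e_0,\dots,e_7$ are the standard unit vectors, $D^hf(x)=\sum_{l=0}^7\mathbf e_l\frac{f(x+he_l)-f(x-he_l)}{2h}$. For $A\subset\mathbb Z^8_h$: $N(x)=\{x,x\pm he_0,\dots,x\pm he_7\}$, $\partial A=\{x\in\mathbb Z^8_h:\ N(x)\cap A\neq\emptyset,\ N(x)\cap(\mathbb Z^8_h\setminus A)\neq\emptyset\}$, $A^\circ=A\setminus\partial A$. A family $(B^h)_{h>0}$ with $B^h\subset\mathbb Z^8_h$ converges to a bounded domain $B\subset\mathbb R^8$ if, as $h\to0^+$, $\max_{\alpha\in\partial B}\min_{\beta\in\partial B^h}\|\alpha-\beta\|\to0$, $\max_{\alpha\in\partial B^h}\min_{\beta\in\partial B}\|\alpha-\beta\|\to0$, $\max_{\alpha\in\overline B}\min_{\beta\in B^h}\|\alpha-\beta\|\to0$,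 and $\max_{\alpha\in B^h}\min_{\beta\in\overline B}\|\alpha-\beta\|\to0$ (topological $\partial B,\overline B$ in $\mathbb R^8$; discrete $\partial B^h$). *)

From HB Require Import structures.
From mathcomp Require Import all_boot all_order all_algebra.
From mathcomp Require Import all_classical all_reals all_analysis.
Set Implicit Arguments. Unset Strict Implicit. Unset Printing Implicit Defensive.
Import Order.TTheory GRing.Theory Num.Theory.
Import numFieldNormedType.Exports.
Local Open Scope classical_set_scope.
Local Open Scope ring_scope.

Section Octo.
Variable R : realType.

(* R^8 and the octonions O, both represented as row vectors 'rV[R]_8. *)
Definition pt := 'rV[R]_8.

Definition ebasis (l : 'I_8) : pt := \row_j (if j == l then 1 else 0).

Definition enorm (x : pt) : R := Num.sqrt (\sum_i (x 0 i) ^+ 2).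

(* Octonion multiplication table (Fano-plane convention):
   e_i e_j = e_k for the cyclically ordered triples below, e_j e_i = -e_k,
   e_i^2 = -1 (i >= 1), e_0 = 1.  The index of e_i e_j is always i xor j. *)
Definition fano_triples : seq (nat * nat * nat) :=
  [:: (1,2,3); (1,4,5); (1,7,6); (2,4,6); (2,5,7); (3,4,7); (3,6,5)]%N.

Definition fano_pos (i j : nat) : bool :=
  has (fun t => let: (a, b, c) := t in
          [|| (i == a) && (j == b), (i == b) && (j == c) | (i == c) && (j == a)])%N
      fano_triples.

Definition osign (i j : 'I_8) : R :=
  if (i == 0%N :> nat) || (j == 0%N :> nat) then 1
  else if i == j then -1
  else if fano_pos i j then 1 else -1.

Definition oidx (i j : 'I_8) : 'I_8 := inord (Nat.lxor i j).

Definition omul (a b : pt) : pt :=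
  \sum_(i < 8) \sum_(j < 8) (a 0 i * b 0 j * osign i j) *: ebasis (oidx i j).

Definition Dop (f : pt -> pt) (x : pt) : pt :=
  \sum_(l < 8) omul (ebasis l) ('D_(ebasis l) f x).

Definition Dh (h : R) (f : pt -> pt) (x : pt) : pt :=
  \sum_(l < 8) omul (ebasis l)
     ((2 * h)^-1 *: (f (x + h *: ebasis l) - f (x - h *: ebasis l))).

Definition lattice (h : R) : set pt :=
  [set x | forall i, exists k : int, x 0 i = k%:~R * h].

Definition nbr (h : R) (x : pt) : set pt :=
  [set y | y = x \/ exists l, y = x + h *: ebasis l \/ y = x - h *: ebasis l].

Definition dbnd (h : R) (A : set pt) : set pt :=
  [set x | lattice h x /\ (exists y, nbr h x y /\ A y)
           /\ (exists y, nbr h x y /\ lattice h y /\ ~ A y)].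

Definition dint (h : R) (A : set pt) : set pt := A `\` dbnd h A.

Definition tbnd (B : set pt) : set pt := closure B `\` interior B.

Definition bounded_domain (B : set pt) : Prop :=
  open B /\ connected B /\ bounded_set B.

(* "for all a in S, min_{b in T} |a - b| < eps" *)
Definition close_to (eps : R) (S T : set pt) : Prop :=
  forall a, S a -> exists2 b, T b & enorm (a - b) < eps.

Definition converges_to (Bh : R -> set pt) (B : set pt) : Prop :=
  (forall h, 0 < h -> Bh h `<=` lattice h) /\
  forall eps, 0 < eps -> exists2 delta, 0 < delta & forall h, 0 < h -> h < delta ->
    [/\ close_to eps (tbnd B) (dbnd h (Bh h)),
        close_to eps (dbnd h (Bh h)) (tbnd B),
        close_to eps (closure B) (Bh h)
      & close_to eps (Bh h) (closure B)].

Definition C1_on (B : set pt) (f : pt -> pt) : Prop :=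
  (forall x, B x -> differentiable f x) /\
  forall l : 'I_8, {within B, continuous (fun x => 'D_(ebasis l) f x)}.

End Octo.

(* Fix x in B and a lattice box of side s = N h near x.  Lattice points of a small
   cube around x lie in the discrete interior of B^h: discrete boundary points stay
   close to the boundary of B, and a lattice neighbour of a point of B^h that is not
   a discrete boundary point is again in B^h.  Summing D^h f^h = 0 over the box
   telescopes, direction by direction, into differences of f^h across opposite faces
   at distance s.  Replacing f^h by f costs O(eps) per face point, and the mean value
   theorem turns each f-difference into s (d f / d x_l)(x) up to s o(1).  Dividing by
   s N^7 gives |Df(x)| <= O(eps / s) + o(1); letting h, then s, go to 0 gives Df(x) = 0. *)

From HB Require Import structures.
From mathcomp Require Import all_boot all_order all_algebra.
From mathcomp Require Import all_classical all_reals all_analysis.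
From mathcomp Require Import ring lra.
Import Order.TTheory GRing.Theory Num.Theory.
Import numFieldNormedType.Exports.
Local Open Scope classical_set_scope.
Local Open Scope ring_scope.
Set Implicit Arguments. Unset Strict Implicit. Unset Printing Implicit Defensive.

Section OctonionProduct.
Variable R : realType.
Implicit Types (a v : pt R).

Lemma normr_osign (i j : 'I_8) : `|osign R i j| = 1.
Proof. by rewrite /osign; repeat case: ifP => _; rewrite ?normrN normr1. Qed.

Lemma normr_ebasis_le1 (l i : 'I_8) : `|ebasis R l 0 i| <= 1.
Proof. by rewrite mxE; case: eqP; rewrite ?normr1 ?normr0. Qed.

Fact omul_is_linear a : linear (omul a).
Proof.
move=> c u v; rewrite /omul scaler_sumr -big_split; apply: eq_bigr => i _.
rewrite scaler_sumr -big_split; apply: eq_bigr => j _.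
by rewrite !mxE scalerA /= -scalerDl; congr (_ *: _); ring.
Qed.

HB.instance Definition _ a :=
  GRing.isLinear.Build R (pt R) (pt R) _ (omul a) (omul_is_linear a).

Lemma omul_ebasisl (l : 'I_8) v :
  omul (ebasis R l) v = \sum_j (v 0 j * osign R l j) *: ebasis R (oidx l j).
Proof.
rewrite /omul (bigD1 l) //= [X in _ + X]big1 ?addr0 => [|i il].
  by apply: eq_bigr => j _; rewrite mxE eqxx mul1r.
by apply: big1 => j _; rewrite mxE (negbTE il) !mul0r scale0r.
Qed.

Lemma normr_omul_ebasis_le (l m : 'I_8) v :
  `|omul (ebasis R l) v 0 m| <= \sum_j `|v 0 j|.
Proof.
rewrite omul_ebasisl summxE; apply: le_trans (ler_norm_sum _ _ _) _.
apply: ler_sum => j _; rewrite mxE !normrM normr_osign mulr1.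
exact: ler_piMr (normr_ebasis_le1 _ _).
Qed.

Lemma normr_sum_omul_ebasis_le (w : 'I_8 -> pt R) (c : R) m :
  (forall l j, `|w l 0 j| <= c) ->
  `|(\sum_l omul (ebasis R l) (w l)) 0 m| <= 64 * c.
Proof.
move=> wc; rewrite summxE; apply: le_trans (ler_norm_sum _ _ _) _.
apply: (@le_trans _ _ (\sum_(l < 8) \sum_(j < 8) c)).
  apply: ler_sum => l _; apply: le_trans (normr_omul_ebasis_le _ _ _) _.
  exact: ler_sum.
by rewrite !sumr_const !card_ord -mulrnA mulr_natl.
Qed.

End OctonionProduct.

Definition ffun_upd T (k : {ffun 'I_8 -> T}) (l : 'I_8) (j : T) : {ffun 'I_8 -> T} :=
  [ffun i => if i == l then j else k i].

Lemma ffun_upd_id T (k : {ffun 'I_8 -> T}) l j : ffun_upd k l j l = j.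
Proof. by rewrite ffunE eqxx. Qed.

Lemma sum_box_lines (V : nmodType) N (G : {ffun 'I_8 -> 'I_N} -> V) l a :
  \sum_k G k = \sum_(k : {ffun 'I_8 -> 'I_N} | k l == a) \sum_j G (ffun_upd k l j).
Proof.
rewrite (partition_big (fun k => ffun_upd k l a) (fun k0 => k0 l == a)) /=;
  last by move=> k _; rewrite ffun_upd_id.
apply: eq_bigr => k0 /eqP k0l.
rewrite (reindex_onto (fun j => ffun_upd k0 l j) (fun k => k l)) /=; last first.
  by move=> k /eqP <-; apply/ffunP => i; rewrite !ffunE; case: eqP => // ->.
apply: eq_bigl => j; rewrite ffun_upd_id eqxx andbT; apply/eqP/ffunP => i.
by rewrite !ffunE; case: eqP => // ->; rewrite k0l.
Qed.

Lemma card_box_face N l (a : 'I_N) : #|[pred k : {ffun 'I_8 -> 'I_N} | k l == a]| = (N ^ 7)%N.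
Proof.
have N_gt0 : (0 < N)%N by case: a => i /(leq_ltn_trans (leq0n i)).
have := sum_box_lines (fun _ => 1%N) l a.
rewrite sum1_card card_ffun !card_ord.
under eq_bigr do rewrite sum1_card card_ord.
by rewrite sum_nat_const expnSr => /eqP; rewrite eqn_pmul2r // => /eqP <-.
Qed.

Lemma telescope_central_diff (R : pzRingType) (V : zmodType) (F : R -> V) N :
  \sum_(j < N) (F (j%:R + 1) - F (j%:R - 1)) =
  (F N%:R - F 0) + (F (N%:R - 1) - F (-1)).
Proof.
rewrite -(big_mkord xpredT (fun j => F (j%:R + 1) - F (j%:R - 1))).
rewrite (eq_bigr (fun j => (F j.+1%:R - F j%:R) + (F (j.+1%:R - 1) - F (j%:R - 1))));
  last by move=> j _; rewrite -natr1 addrK addrA subrK.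
by rewrite big_split /= !telescope_sumr // sub0r.
Qed.

Section GridPoints.
Variable R : realType.
Implicit Types (p : pt R) (h z t : R).

Definition gridpt p h (c : 'I_8 -> R) : pt R := \row_i (p 0 i + h * c i).

Definition box_coord N (k : {ffun 'I_8 -> 'I_N}) (i : 'I_8) : R := (k i)%:R.
Arguments box_coord {N} k i.

Definition face_coord N (k : {ffun 'I_8 -> 'I_N}) (l : 'I_8) z (i : 'I_8) : R :=
  if i == l then z else (k i)%:R.
Arguments face_coord {N} k l z i.

Lemma gridpt_addebasis p h N (k : {ffun 'I_8 -> 'I_N}) l :
  gridpt p h (box_coord k) + h *: ebasis R l = gridpt p h (face_coord k l ((k l)%:R + 1)).
Proof. by apply/rowP => i; rewrite !mxE /box_coord /face_coord; case: eqP => [->|_]; ring. Qed.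

Lemma gridpt_subebasis p h N (k : {ffun 'I_8 -> 'I_N}) l :
  gridpt p h (box_coord k) - h *: ebasis R l = gridpt p h (face_coord k l ((k l)%:R - 1)).
Proof. by apply/rowP => i; rewrite !mxE /box_coord /face_coord; case: eqP => [->|_]; ring. Qed.

Lemma gridpt_face_add p h N (k : {ffun 'I_8 -> 'I_N}) l z t :
  gridpt p h (face_coord k l (z + t)) = (h * t) *: ebasis R l + gridpt p h (face_coord k l z).
Proof. by apply/rowP => i; rewrite !mxE /face_coord; case: eqP => [->|_]; ring. Qed.

Lemma face_coord_upd N (k : {ffun 'I_8 -> 'I_N}) l j z :
  face_coord (ffun_upd k l j) l z = face_coord k l z.
Proof. by apply/funext => i; rewrite /face_coord ffunE; case: eqP. Qed.

(* What survives of [\sum_k D^h g] over the box [p + h {0, ..., N-1}^8] after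
   telescoping along the lines in direction [l]; these lines are indexed by their
   points on the slice [k l = a], so any [a] will do. *)
Definition face_flux (g : pt R -> pt R) p h N (a : 'I_N) (l : 'I_8) : pt R :=
  \sum_(k : {ffun 'I_8 -> 'I_N} | k l == a)
    ((g (gridpt p h (face_coord k l N%:R)) - g (gridpt p h (face_coord k l 0)))
     + (g (gridpt p h (face_coord k l (N%:R - 1))) - g (gridpt p h (face_coord k l (-1))))).

Lemma sum_Dh_box (g : pt R -> pt R) p h N (a : 'I_N) :
  \sum_(k : {ffun 'I_8 -> 'I_N}) Dh h g (gridpt p h (box_coord k)) =
  (2 * h)^-1 *: \sum_l omul (ebasis R l) (face_flux g p h a l).
Proof.
rewrite /Dh exchange_big /= scaler_sumr; apply: eq_bigr => l _.
rewrite -linearZ -linear_sum /= -scaler_sumr (sum_box_lines _ l a); congr (omul _ (_ *: _)).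
apply: eq_bigr => k _.
rewrite -(telescope_central_diff (fun z => g (gridpt p h (face_coord k l z)))).
by apply: eq_bigr => j _; rewrite gridpt_addebasis gridpt_subebasis !face_coord_upd !ffun_upd_id.
Qed.

End GridPoints.
Arguments box_coord {R N} k i.
Arguments face_coord {R N} k l z i.

Section LineDerivatives.
Variable R : realType.
Implicit Types (f : pt R -> pt R) (t eta : R).

Lemma is_derive_along f (y e : pt R) t :
  differentiable f (t *: e + y) ->
  is_derive t 1 (fun s : R => f (s *: e + y)) ('D_e f (t *: e + y)).
Proof.
move=> df.
have quotE : (fun h : R => h^-1 *: (((fun s => f (s *: e + y)) \o shift t) (h *: 1)
                                     - f (t *: e + y)))
  = (fun h : R => h^-1 *: ((f \o shift (t *: e + y)) (h *: e) - f (t *: e + y))).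
  apply/funext => h /=; congr (_ *: (f _ - _)).
  by rewrite /shift /= scalerDl [h *: 1]mulr1 addrA.
apply: DeriveDef; last by rewrite /derive /= quotE.
by rewrite /derivable quotE; exact: diff_derivable.
Qed.

Lemma is_derive_coord (g : R -> pt R) t (d : pt R) j :
  is_derive t 1 g d -> is_derive t 1 (fun s => g s 0 j) (d 0 j).
Proof.
case=> dg <-.
have quotE : (fun h : R => h^-1 *: (((fun s => g s 0 j) \o shift t) (h *: 1) - g t 0 j))
  = (fun M : pt R => M 0 j) \o (fun h : R => h^-1 *: ((g \o shift t) (h *: 1) - g t)).
  by apply/funext => h /=; rewrite !mxE.
have cvg_coord : ((fun M : pt R => M 0 j)
    \o (fun h : R => h^-1 *: ((g \o shift t) (h *: 1) - g t))) @ 0^' --> ('D_1 g t) 0 j.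
  by apply: continuous_cvg; [exact: coord_continuous | exact: dg].
apply: DeriveDef; first by rewrite /derivable quotE; apply/cvg_ex; exists (('D_1 g t) 0 j).
by rewrite /derive quotE; exact: cvg_lim.
Qed.

Lemma mvt_coord_le f (y e d : pt R) t eta j :
  0 <= t ->
  (forall s, 0 <= s <= t -> differentiable f (s *: e + y) /\
      `|('D_e f (s *: e + y) - d) 0 j| <= eta) ->
  `|(f (t *: e + y) - f y - t *: d) 0 j| <= t * eta.
Proof.
move=> t_ge0 near_d.
have der s : 0 <= s <= t ->
    is_derive s 1 (fun s => f (s *: e + y) 0 j) ('D_e f (s *: e + y) 0 j).
  by move=> /near_d[df _]; exact/is_derive_coord/is_derive_along.
have [c c0t mvt] : exists2 c, c \in `[0, t] &
    f (t *: e + y) 0 j - f (0 *: e + y) 0 j = 'D_e f (c *: e + y) 0 j * (t - 0).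
  apply: (@MVT_segment R (fun s => f (s *: e + y) 0 j) (fun s => 'D_e f (s *: e + y) 0 j)) => //.
    by move=> s; rewrite in_itv /= => /andP[s0 st]; apply: der; rewrite !ltW.
  apply: continuous_in_subspaceT => s; rewrite inE /= in_itv /= => st.
  have [dr _] := der s st.
  exact/differentiable_continuous/derivable1_diffP.
rewrite scale0r add0r subr0 in mvt.
rewrite !mxE mvt [t * d 0 j]mulrC -mulrBl normrM (ger0_norm t_ge0) mulrC ler_wpM2l //.
by move: c0t; rewrite in_itv /= => /near_d[_]; rewrite !mxE.
Qed.

End LineDerivatives.

Section Cubes.
Variable R : realType.
Implicit Types (x y z w : pt R) (r s : R).

Definition cube x r z := forall i, `|z 0 i - x 0 i| < r.

Lemma cubeC x y r : cube x r y -> cube y r x.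
Proof. by move=> xy i; rewrite distrC. Qed.

Lemma cube_trans x y z r s : cube x r y -> cube y s z -> cube x (r + s) z.
Proof.
move=> xy yz i; have := xy i; have := yz i.
by rewrite !ltr_norml => /andP[? ?] /andP[? ?]; apply/andP; split; lra.
Qed.

Lemma cube_widen x z r s : r <= s -> cube x r z -> cube x s z.
Proof. by move=> rs xz i; apply: lt_le_trans rs. Qed.

Lemma ball_cube x z r : ball x r z -> cube x r z.
Proof. by move=> [_ xz] i; rewrite distrC; exact: xz. Qed.

Lemma cube_ball x z r : 0 < r -> cube x r z -> ball x r z.
Proof. by move=> r_gt0 xz; split => // i j; rewrite (ord1 i) /ball /= distrC; exact: xz. Qed.

Lemma normr_coord_le_enorm (v : pt R) j : `|v 0 j| <= enorm v.
Proof.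
rewrite /enorm -sqrtr_sqr ler_sqrt ?sumr_ge0 // => [|i _]; last exact: sqr_ge0.
by rewrite (bigD1 j) //= lerDl sumr_ge0 // => i _; exact: sqr_ge0.
Qed.

Lemma enorm_cube x z r : enorm (z - x) < r -> cube x r z.
Proof. by move=> zx i; apply: le_lt_trans zx; have := normr_coord_le_enorm (z - x) i; rewrite !mxE. Qed.

Lemma tbnd_open_notin (B : set (pt R)) z : open B -> tbnd B z -> ~ B z.
Proof. by move=> /interior_id oB [_]; rewrite oB. Qed.

Lemma C1_local_cube (B : set (pt R)) (f : pt R -> pt R) x eta :
  open B -> (forall l, {within B, continuous (fun z => 'D_(ebasis R l) f z)}) ->
  B x -> 0 < eta ->
  exists2 r, 0 < r & forall z, cube x r z ->
    B z /\ forall l j, `|('D_(ebasis R l) f z - 'D_(ebasis R l) f x) 0 j| < eta.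
Proof.
move=> oB Df_cont Bx eta_gt0.
have near_Df l : \forall z \near x, ball ('D_(ebasis R l) f x) eta ('D_(ebasis R l) f z).
  move: (Df_cont l); rewrite continuous_open_subspace // => /(_ x (mem_set Bx)).
  by apply; exact: nbhsx_ballx.
have nearB : \forall z \near x, B z by move: oB; rewrite openE; exact.
have [r r_gt0 xr] := iffLR (nbhs_ballP _ _) (filterI nearB (filter_forall _ near_Df)).
exists r => // z /(cube_ball r_gt0)/xr[Bz Dfz]; split => // l j.
by have /ball_cube/(_ j) := Dfz l; rewrite !mxE.
Qed.

End Cubes.

Section LatticeConnectivity.
Variable R : realType.
Implicit Types (x z w : pt R) (h r s : R) (A : set (pt R)).

Definition l1dist w z := \sum_i `|w 0 i - z 0 i|.

Lemma l1dist_le0 w z : l1dist w z <= 0 -> w = z.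
Proof.
move=> wz; apply/rowP => i; apply/eqP; rewrite -subr_eq0 -normr_le0.
by apply: le_trans wz; rewrite /l1dist (bigD1 i) //= lerDl sumr_ge0.
Qed.

Lemma lattice_coord_gap h w z i :
  0 < h -> lattice h w -> lattice h z -> w 0 i != z 0 i -> h <= `|w 0 i - z 0 i|.
Proof.
move=> h_gt0 /(_ i)[n ->] /(_ i)[m ->] nm.
rewrite -mulrBl -intrB normrM (gtr0_norm h_gt0) ler_peMl //; first exact: ltW.
apply: norm_intr_ge1; first exact: intr_int.
by apply: contra nm; rewrite intrB subr_eq0 => /eqP ->.
Qed.

(* Since [b] is at least [h] away, the step [t] towards it does not overshoot. *)
Lemma step_toward a b h c r :
  0 <= h -> h <= `|a - b| -> `|a - c| < r -> `|b - c| < r ->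
  let t := if a < b then h else - h in
  `|a + t - c| < r /\ `|a + t - b| + h = `|a - b|.
Proof.
move=> h_ge0 gap; rewrite !ltr_norml => /andP[? ?] /andP[? ?] t.
rewrite ltr_norml /t; case: (ltrP a b) => ab.
  rewrite ltr0_norm ?subr_lt0 // in gap *.
  rewrite ler0_norm; last lra.
  by split; [apply/andP; split|]; lra.
rewrite ger0_norm ?subr_ge0 // in gap *.
rewrite ger0_norm; last lra.
by split; [apply/andP; split|]; lra.
Qed.

Lemma lattice_shift h w i t :
  t = h \/ t = - h -> lattice h w -> lattice h (w + t *: ebasis R i).
Proof.
move=> ht Lw j; rewrite !mxE; have [n ->] := Lw j.
case: eqP => _; last by exists n; rewrite mulr0 addr0.
by case: ht => ->; [exists (n + 1) | exists (n - 1)]; rewrite intrD ?rmorphN1 ?rmorph1; ring.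
Qed.

Lemma shift_mem_notdbnd h A w i t :
  A `<=` lattice h -> t = h \/ t = - h -> A w -> ~ dbnd h A w -> A (w + t *: ebasis R i).
Proof.
move=> AL ht Aw wA; apply: contrapT => nA; apply: wA; split; first exact: AL.
split; first by exists w; split => //; left.
exists (w + t *: ebasis R i); split; last by split => //; exact/lattice_shift/AL.
by right; exists i; case: ht => ->; [left | right; rewrite scaleNr].
Qed.

Lemma lattice_step_toward h x r w z :
  0 < h -> lattice h w -> lattice h z -> w != z -> cube x r w -> cube x r z ->
  exists i t, [/\ t = h \/ t = - h, cube x r (w + t *: ebasis R i)
                & l1dist (w + t *: ebasis R i) z + h = l1dist w z].
Proof.
move=> h_gt0 Lw Lz wz xw xz.
have [i wzi] : exists i, w 0 i != z 0 i.
  apply/existsP; apply: contraR wz => /existsPn wz; apply/eqP/rowP => i.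
  exact/eqP/negPn/wz.
have gap := lattice_coord_gap h_gt0 Lw Lz wzi.
have [xw' dist'] := step_toward (ltW h_gt0) gap (xw i) (xz i).
have shiftE j : (w + (if w 0 i < z 0 i then h else - h) *: ebasis R i) 0 j
    = w 0 j + (if j == i then if w 0 i < z 0 i then h else - h else 0).
  by rewrite !mxE; case: eqP; rewrite ?mulr1 ?mulr0.
exists i, (if w 0 i < z 0 i then h else - h); split.
- by case: ifP; [left | right].
- by move=> j; rewrite shiftE; case: eqP => [->|_]; rewrite ?addr0.
rewrite /l1dist (bigD1 i) //= [RHS](bigD1 i) //= shiftE eqxx -dist' -!addrA.
congr (_ + _); rewrite addrC; congr (_ + _); apply: eq_bigr => j /negbTE ji.
by rewrite shiftE ji addr0.
Qed.

Lemma lattice_cube_sub h x r A b :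
  0 < h -> A `<=` lattice h -> (forall w, lattice h w -> cube x r w -> ~ dbnd h A w) ->
  A b -> cube x r b -> forall z, lattice h z -> cube x r z -> A z.
Proof.
move=> h_gt0 AL nodbnd Ab xb z Lz xz.
suff reach n : forall w, A w -> cube x r w -> l1dist w z <= n%:R * h -> A z.
  apply: (reach (Num.bound (l1dist b z / h)) b Ab xb).
  rewrite -ler_pdivrMr //; apply/ltW/archi_boundP.
  by apply: divr_ge0 (ltW h_gt0); apply: sumr_ge0.
elim: n => [|n IHn] w Aw xw wz.
  by rewrite mul0r in wz; rewrite -(l1dist_le0 wz).
have [<- // | w_neq_z] := eqVneq w z.
have [i [t [ht xw' dist']]] := lattice_step_toward h_gt0 (AL _ Aw) Lz w_neq_z xw xz.
apply: (IHn (w + t *: ebasis R i)) => //.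
  exact: shift_mem_notdbnd (nodbnd _ (AL _ Aw) xw).
by move: wz; rewrite -dist' -natr1 mulrDl mul1r lerD2r.
Qed.

Lemma lattice_cube_dint (B : set (pt R)) A h x r s :
  open B -> 0 < h -> A `<=` lattice h -> s <= r -> B x ->
  (forall z, cube x (r + s) z -> B z) ->
  close_to s (dbnd h A) (tbnd B) -> close_to s (closure B) A ->
  forall w, lattice h w -> cube x r w -> dint h A w.
Proof.
move=> oB h_gt0 AL sr Bx xB dbnd_near A_dense.
have nodbnd w : lattice h w -> cube x r w -> ~ dbnd h A w.
  move=> _ xw /dbnd_near[t Bt /enorm_cube/cubeC wt].
  exact/(tbnd_open_notin oB Bt)/xB/(cube_trans xw wt).
have [b Ab /enorm_cube/cubeC xb] := A_dense x (subset_closure Bx).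
move=> w Lw xw; split; last exact: nodbnd.
exact: lattice_cube_sub h_gt0 AL nodbnd Ab (cube_widen sr xb) w Lw xw.
Qed.

End LatticeConnectivity.

Section Boxes.
Variable R : realType.
Implicit Types (x p : pt R) (h z : R) (c : 'I_8 -> R).

Lemma normr_sum_sub_coord_le (I : finType) (P : pred I) (F : I -> pt R) (v : pt R) e j :
  (forall i, P i -> `|(F i - v) 0 j| <= e) ->
  `|(\sum_(i | P i) F i - #|P|%:R *: v) 0 j| <= #|P|%:R * e.
Proof.
move=> Fe; rewrite scaler_nat mulr_natl -!sumr_const -sumrB summxE.
by apply: le_trans (ler_norm_sum _ _ _) _; apply: ler_sum => i; exact: Fe.
Qed.

Definition in_box N c := forall i, -1 <= c i <= N%:R.

Lemma box_coord_in_box N (k : {ffun 'I_8 -> 'I_N}) : in_box N (box_coord k).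
Proof.
move=> i; rewrite /box_coord ler_nat ltnW // andbT.
by apply: le_trans (ler0n _ _); rewrite lerN10.
Qed.

Lemma face_coord_in_box N (k : {ffun 'I_8 -> 'I_N}) l z :
  -1 <= z <= N%:R -> in_box N (face_coord k l z).
Proof. by move=> z_in i; rewrite /face_coord; case: eqP => // _; exact: box_coord_in_box. Qed.

Lemma face_coord_int N (k : {ffun 'I_8 -> 'I_N}) l z i :
  z \is a Num.int -> face_coord k l z i \is a Num.int.
Proof. by rewrite /face_coord; case: eqP => // _ _; exact: natr_int. Qed.

Lemma lattice_gridpt p h c :
  lattice h p -> (forall i, c i \is a Num.int) -> lattice h (gridpt p h c).
Proof.
move=> Lp c_int i; rewrite mxE; have [m ->] := Lp i; have /intrP[n ->] := c_int i.
by exists (m + n); rewrite intrD; ring.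
Qed.

Lemma cube_gridpt x p h N c :
  0 < h -> (0 < N)%N -> cube x (h * N%:R) p -> in_box N c ->
  cube x (2 * (h * N%:R)) (gridpt p h c).
Proof.
move=> h_gt0 N_gt0 xp c_in i; rewrite mxE.
have N_ge1 : 1 <= (N%:R : R) by rewrite ler1n.
have := xp i; have /andP[c_ge c_le] := c_in i; rewrite !ltr_norml => /andP[? ?].
have : 0 <= h * (N%:R - c i) by apply: mulr_ge0; lra.
have : 0 <= h * (c i + 1) by apply: mulr_ge0; lra.
have : 0 <= h * (N%:R - 1) by apply: mulr_ge0; lra.
by move=> *; apply/andP; split; nra.
Qed.

End Boxes.

Section BoxEstimate.
Variable R : realType.
Variables (f g : pt R -> pt R) (x p : pt R) (h : R) (N : nat).
Variables (d : 'I_8 -> pt R) (eps eta : R).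
Hypothesis h_gt0 : 0 < h.
Hypothesis N_gt0 : (0 < N)%N.
Hypothesis xp : cube x (h * N%:R) p.
Hypothesis Lp : lattice h p.
Hypothesis g_monogenic_close : forall w, lattice h w ->
  cube x (2 * (h * N%:R)) w -> Dh h g w = 0 /\ forall j, `|(g w - f w) 0 j| <= eps.
Hypothesis f_diff_Df_close : forall w, cube x (2 * (h * N%:R)) w ->
  differentiable f w /\ forall l j, `|('D_(ebasis R l) f w - d l) 0 j| <= eta.

Lemma cube_box_gridpt c : in_box N c -> cube x (2 * (h * N%:R)) (gridpt p h c).
Proof. exact: cube_gridpt h_gt0 N_gt0 xp. Qed.

Lemma sum_omul_face_flux_eq0 (a : 'I_N) : \sum_l omul (ebasis R l) (face_flux g p h a l) = 0.
Proof.
have : \sum_(k : {ffun 'I_8 -> 'I_N}) Dh h g (gridpt p h (box_coord k)) = 0.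
  apply: big1 => k _; apply: (g_monogenic_close _ _).1.
    by apply: lattice_gridpt Lp _ => i; exact: natr_int.
  exact/cube_box_gridpt/box_coord_in_box.
rewrite (sum_Dh_box _ _ _ a) => /eqP; rewrite scaler_eq0 invr_eq0 mulf_eq0 (gt_eqF h_gt0) orbF.
by rewrite pnatr_eq0 => /eqP.
Qed.

Lemma face_gridpt_close (k : {ffun 'I_8 -> 'I_N}) l z j : z \is a Num.int -> -1 <= z <= N%:R ->
  `|(g (gridpt p h (face_coord k l z)) - f (gridpt p h (face_coord k l z))) 0 j| <= eps.
Proof.
move=> z_int z_in; apply: (g_monogenic_close _ _).2.
  by apply: lattice_gridpt Lp _ => i; exact: face_coord_int.
exact/cube_box_gridpt/face_coord_in_box.
Qed.

Lemma face_gridpt_mvt (k : {ffun 'I_8 -> 'I_N}) l z j : -1 <= z <= 0 ->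
  `|(f (gridpt p h (face_coord k l (z + N%:R))) - f (gridpt p h (face_coord k l z))
     - (h * N%:R) *: d l) 0 j| <= h * N%:R * eta.
Proof.
move=> /andP[z_ge z_le]; rewrite gridpt_face_add.
apply: mvt_coord_le; first exact: mulr_ge0 (ltW h_gt0) (ler0n _ _).
move=> t /andP[t_ge0 t_le].
have -> : t *: ebasis R l + gridpt p h (face_coord k l z)
    = gridpt p h (face_coord k l (z + t / h)).
  by rewrite gridpt_face_add mulrC divfK // gt_eqF.
have t_h_le : t / h <= N%:R by rewrite ler_pdivrMr // mulrC.
have t_h_ge0 : 0 <= t / h := divr_ge0 t_ge0 (ltW h_gt0).
have z_in : -1 <= z + t / h <= N%:R by apply/andP; split; lra.
have [f_diff Df_close] := f_diff_Df_close (cube_box_gridpt (face_coord_in_box k l z_in)).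
by split => //; exact: Df_close.
Qed.

Lemma face_flux_coord_le (a : 'I_N) l j :
  `|(face_flux g p h a l - (N ^ 7)%:R *: ((2 * (h * N%:R)) *: d l)) 0 j|
    <= (N ^ 7)%:R * (4 * eps + 2 * (h * N%:R * eta)).
Proof.
rewrite /face_flux -(card_box_face l a).
apply: (normr_sum_sub_coord_le (P := [pred k : {ffun 'I_8 -> 'I_N} | k l == a])) => k _.
have N_ge1 : 1 <= (N%:R : R) by rewrite ler1n N_gt0.
have N1_int : (N%:R - 1 : R) \is a Num.int by rewrite rpredB ?natr_int ?int_num1.
have m1_int : (-1 : R) \is a Num.int by rewrite rpredN int_num1.
have [rN r0 rN1 rm1] : [/\ -1 <= (N%:R : R) <= N%:R, -1 <= (0 : R) <= N%:R,
    -1 <= (N%:R - 1 : R) <= N%:R & -1 <= (-1 : R) <= N%:R].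
  by split; apply/andP; split; lra.
have [s0 sm1] : (-1 <= (0 : R) <= 0) /\ (-1 <= (-1 : R) <= 0).
  by split; apply/andP; split; lra.
have := face_gridpt_close k l j (natr_int _ N) rN.
have := face_gridpt_close k l j (int_num0 _) r0.
have := face_gridpt_close k l j N1_int rN1.
have := face_gridpt_close k l j m1_int rm1.
have := face_gridpt_mvt k l j s0; rewrite add0r.
have := face_gridpt_mvt k l j sm1; rewrite [-1 + _]addrC.
rewrite !mxE !ler_norml.
move=> /andP[? ?] /andP[? ?] /andP[? ?] /andP[? ?] /andP[? ?] /andP[? ?].
apply/andP; split; lra.
Qed.

Lemma Dop_coord_le m :
  `|(\sum_l omul (ebasis R l) (d l)) 0 m| <= 64 * (2 * eps / (h * N%:R) + eta).
Proof.
pose S := 2 * (h * N%:R); pose c : R := (N ^ 7)%:R.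
have Nr_gt0 : (0 : R) < N%:R by rewrite ltr0n N_gt0.
have S_gt0 : 0 < S by rewrite !mulr_gt0.
have c_gt0 : 0 < c by rewrite ltr0n expn_gt0 N_gt0.
have cS_neq0 : c * S != 0 by rewrite mulf_eq0 negb_or !gt_eqF.
pose a := Ordinal N_gt0; pose E l := face_flux g p h a l - c *: (S *: d l).
have -> : \sum_l omul (ebasis R l) (d l) = - (c * S)^-1 *: \sum_l omul (ebasis R l) (E l).
  apply/eqP; rewrite -subr_eq0 scaleNr opprK scaler_sumr -big_split /=.
  rewrite (eq_bigr (fun l => (c * S)^-1 *: omul (ebasis R l) (face_flux g p h a l))).
    by rewrite -scaler_sumr sum_omul_face_flux_eq0 scaler0.
  move=> l _; rewrite -!linearZ -linearD /E scalerBr !scalerA mulVf //.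
  by rewrite scale1r addrC subrK.
rewrite mxE normrM normrN normfV (gtr0_norm (mulr_gt0 c_gt0 S_gt0)).
rewrite ler_pdivrMl ?mulr_gt0 //.
apply: le_trans (normr_sum_omul_ebasis_le (c := c * (4 * eps + 2 * (h * N%:R * eta))) _ _) _.
  by move=> l j; exact: face_flux_coord_le.
by rewrite le_eqVlt; apply/predU1l; rewrite /S; field; rewrite !gt_eqF.
Qed.

End BoxEstimate.

Lemma fine_grid_step (R : realType) (P Q : R -> Prop) (s : R) : 0 < s ->
  (exists2 delta, 0 < delta & forall h, 0 < h -> h < delta -> P h) ->
  (exists2 delta, 0 < delta & forall h, 0 < h -> h < delta -> Q h) ->
  exists n : nat, P (s / n.+1%:R) /\ Q (s / n.+1%:R).
Proof.
move=> s_gt0 [dP dP_gt0 P_near0] [dQ dQ_gt0 Q_near0].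
have d_gt0 : 0 < Num.min dP dQ by rewrite lt_min dP_gt0.
exists (Num.bound (s / Num.min dP dQ)).
have h_gt0 : 0 < s / (Num.bound (s / Num.min dP dQ)).+1%:R by rewrite divr_gt0.
have : s / (Num.bound (s / Num.min dP dQ)).+1%:R < Num.min dP dQ.
  rewrite ltr_pdivrMr // mulrC -ltr_pdivrMr //.
  apply: lt_le_trans (archi_boundP _) _; last by rewrite ler_nat.
  exact: divr_ge0 (ltW s_gt0) (ltW d_gt0).
by rewrite lt_min => /andP[hP hQ]; split; [exact: P_near0 | exact: Q_near0].
Qed.

Unset Implicit Arguments.

Theorem mainTheorem19 (R : realType) (B : set (pt R)) (Bh : R -> set (pt R))
  (f : pt R -> pt R) (fh : R -> pt R -> pt R) :
  bounded_domain B ->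
  converges_to Bh B ->
  C1_on B f ->
  (forall h, 0 < h -> forall x, dint h (Bh h) x -> Dh h (fh h) x = 0) ->
  (forall eps, 0 < eps -> exists2 delta, 0 < delta & forall h, 0 < h -> h < delta ->
      forall x, Bh h x -> B x -> enorm (f x - fh h x) < eps) ->
  forall x, B x -> Dop f x = 0.
Proof.
move=> [oB _] [Bh_lat conv] [f_diff Df_cont] Dh0 approx x Bx.
apply/rowP => m; rewrite mxE; apply/normr0_eq0/le_anti; rewrite normr_ge0 andbT.
apply/ler_addgt0Pr => eps eps_gt0; rewrite add0r.
have [r r_gt0 near_x] := C1_local_cube oB Df_cont Bx (divr_gt0 eps_gt0 (ltr0n _ 128)).
pose s := r / 4; have s_gt0 : 0 < s by rewrite divr_gt0.
have eps'_gt0 : 0 < eps * s / 256 by rewrite !divr_gt0 ?mulr_gt0.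
have [n [[_ dbnd_near B_dense _] approx_h]] := fine_grid_step s_gt0 (conv s s_gt0) (approx _ eps'_gt0).
pose h := s / n.+1%:R; have h_gt0 : 0 < h by rewrite divr_gt0.
have hN : h * n.+1%:R = s by rewrite divfK.
have [b Bh_b /enorm_cube/cubeC xb] := B_dense x (subset_closure Bx).
have [s_le s2_le s3_le] : [/\ s <= 2 * s, 2 * s <= r & 2 * s + s <= r].
  by rewrite /s; split; lra.
have xB z : cube x (2 * s + s) z -> B z by move=> xz; have [] := near_x z (cube_widen s3_le xz).
have in_dint := lattice_cube_dint oB h_gt0 (Bh_lat h h_gt0) s_le Bx xB dbnd_near B_dense.
apply: le_trans (Dop_coord_le (f := f) (g := fh h) (x := x)
  (d := fun l => 'D_(ebasis R l) f x) (eps := eps * s / 256) (eta := eps / 128)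
  h_gt0 (ltn0Sn n) _ (Bh_lat h h_gt0 _ Bh_b) _ _ m) _; rewrite hN //.
- move=> w Lw xw; have w_dint := in_dint w Lw xw; split; first exact: Dh0.
  move=> j; rewrite -opprB mxE normrN; apply/ltW/(le_lt_trans (normr_coord_le_enorm _ j)).
  have [Bh_w _] := w_dint.
  by apply: (approx_h w Bh_w); apply: xB; apply: cube_widen xw; lra.
- move=> w xw; have [Bw Df_w] := near_x w (cube_widen s2_le xw).
  by split; [exact: f_diff | move=> l j; exact/ltW/Df_w].
- by rewrite le_eqVlt; apply/predU1l; field; rewrite gt_eqF.
Qed.
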